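(* Let $X$ be a complete nonsingular toric variety with fan $\Delta$. The following are equivalent: (i) $X$ is Fano, and every toric subvariety of $X$ is Fano; (ii) for every primitive set $\{D_1,\ldots,D_k\}$, either $\rho_1+\cdots+\rho_k=0$ or $\rho_1+\cdots+\rho_k=\rho'$ for some ray generator $\rho'$ of $\Delta$; (iii) for every maximal cone $\mu=\langle\rho_1,\ldots,\rho_n\rangle$ of $\Delta$ and every ray generator $\rho$, writing $\rho=b_1\rho_1+\cdots+b_n\rho_n$, we have $-1\le b_j\le1$ for all $j$, with $b_j=1$ for at most one $j$.
   Context: $\Delta$ is a complete fan in $N_{\mathbb R}$, $N\cong\mathbb{Z}^n$, each cone generated by part of a $\mathbb{Z}$-basis. Each ray has a primitive generator $\rho$ (ray generator) and corresponding toric divisor $D$; toric divisors meet iff their ray generators span a cone. A toric subvariety is a torus-orbit closure $X(\sigma)$, $\sigma\in\Delta$. A primitive set is a set $\{D_1,\ldots,D_k\}$ of toric divisors with $D_1\cap\cdots\cap D_k=\emptyset$ but every proper subset having nonempty intersection. *)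

From HB Require Import structures.
From mathcomp Require Import all_boot all_order all_algebra.
From mathcomp Require Import reals.
Set Implicit Arguments. Unset Strict Implicit. Unset Printing Implicit Defensive.
Import Order.TTheory GRing.Theory Num.Theory.
Local Open Scope ring_scope.

(* A fan Delta in N_R = R^n, N = Z^n, is encoded by:
   - m ray generators  ray : 'I_m -> 'rV[int]_n  (the lattice N = Z^n);
   - a set C of cones, each cone given by the set of indices of its rays
     (cones of a nonsingular fan are simplicial, so are determined by rays). *)

Section Fan.
Variables (R : realType) (n m : nat) (ray : 'I_m -> 'rV[int]_n).

Definition rvR (v : 'rV[int]_n) : 'rV[R]_n := map_mx (fun z : int => z%:~R) v.

Definition in_cone (A : {set 'I_m}) (x : 'rV[R]_n) : Prop :=
  exists c : 'I_m -> R, (forall i, 0 <= c i) /\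
    x = \sum_(i in A) c i *: rvR (ray i).

Definition part_of_basis (A : {set 'I_m}) : Prop :=
  exists B : 'M[int]_n, \det B \is a GRing.unit /\
    forall i, i \in A -> exists j : 'I_n, row j B = ray i.

Definition smooth_fan (C : {set {set 'I_m}}) : Prop :=
  [/\ injective ray,
      forall i, [set i] \in C,
      forall A B : {set 'I_m}, A \in C -> B \subset A -> B \in C,
      forall A : {set 'I_m}, A \in C -> part_of_basis A &
      forall (A B : {set 'I_m}) x, A \in C -> B \in C -> in_cone A x -> in_cone B x ->
        in_cone (A :&: B) x].

Definition complete_fan (C : {set {set 'I_m}}) : Prop :=
  forall x : 'rV[R]_n, exists2 A, A \in C & in_cone A x.

Definition maximal_cone (C : {set {set 'I_m}}) (A : {set 'I_m}) : Prop :=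
  A \in C /\ forall B : {set 'I_m}, B \in C -> A \subset B -> B = A.

Definition pairing (u : 'rV[R]_n) (v : 'rV[int]_n) : R :=
  \sum_(k < n) u 0 k * (v 0 k)%:~R.

(* The toric subvariety X(tau) (tau in C) has fan Star(tau) in
   N(tau)_R = N_R / span(tau): its rays are the images of the rays j
   with j \notin tau and tau :|: [set j] \in C, its maximal cones are the
   images of the maximal cones sigma \supseteq tau, and linear functionals
   on N(tau)_R are the functionals on N_R vanishing on tau.
   X(tau) is Fano iff its anticanonical divisor (the sum of its toric
   divisors) is ample, i.e. (toric ampleness criterion, strict convexity of
   the support function) for every maximal cone sigma of Star(tau) there is
   u with <u, rho> = 1 on the rays of sigma, and <u, rho> < 1 on every
   other ray of Star(tau).  For tau = set0 this is "X is Fano". *)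
Definition fano_orbit_closure (C : {set {set 'I_m}}) (tau : {set 'I_m}) : Prop :=
  forall sigma : {set 'I_m}, maximal_cone C sigma -> tau \subset sigma ->
    exists u : 'rV[R]_n,
      [/\ forall i, i \in tau -> pairing u (ray i) = 0,
          forall i, i \in sigma -> i \notin tau -> pairing u (ray i) = 1 &
          forall j, j \notin sigma -> tau :|: [set j] \in C ->
            pairing u (ray j) < 1].

(* {D_i : i in S} is a primitive set: the rays in S do not span a cone
   (the divisors have empty intersection) but every proper subset does. *)
Definition primitive_set (C : {set {set 'I_m}}) (S : {set 'I_m}) : Prop :=
  S \notin C /\ forall T : {set 'I_m}, T \proper S -> T \in C.

Definition cond_i (C : {set {set 'I_m}}) : Prop :=
  fano_orbit_closure C set0 /\
  forall tau : {set 'I_m}, tau \in C -> fano_orbit_closure C tau.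

Definition cond_ii (C : {set {set 'I_m}}) : Prop :=
  forall S : {set 'I_m}, primitive_set C S ->
    \sum_(i in S) ray i = 0 \/ exists j, \sum_(i in S) ray i = ray j.

Definition cond_iii (C : {set {set 'I_m}}) : Prop :=
  forall mu : {set 'I_m}, maximal_cone C mu -> forall k (b : 'I_m -> R),
    rvR (ray k) = \sum_(i in mu) b i *: rvR (ray i) ->
    (forall i, i \in mu -> -1 <= b i <= 1) /\
    (#|[set i in mu | b i == 1%R]| <= 1)%N.

End Fan.

From HB Require Import structures.
From mathcomp Require Import all_boot all_order all_algebra.
From mathcomp Require Import reals.
From Stdlib Require Import Classical.
From mathcomp Require Import lra zify.
Set Implicit Arguments. Unset Strict Implicit. Unset Printing Implicit Defensive.
Import Order.TTheory GRing.Theory Num.Theory.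
Local Open Scope ring_scope.

(* Smoothness makes the rays of a cone part of a lattice basis: coordinates with
   respect to a cone are unique and integral, and prescribed values on the rays of a
   cone are taken by a linear form. Completeness passes to the stars Star(tau): every
   vector is a combination of the rays of a maximal cone containing tau, with
   nonnegative coefficients off tau.
   (i) => (iii): by induction on #|tau|, the linear form witnessing that X(tau) is
   Fano on a maximal cone is at most 1 on every ray; the induction step descends along
   the relations rho_j + rho_z = 0 or rho_a modulo span(tau - z), which are condition
   (ii) for the pairs {j, z} of the Fano fan Star(tau - z). For tau contained in a
   maximal cone mu this bounds the partial sums of the coordinates in mu by 1.
   (iii) => (ii): for a primitive set S and j in S, the coordinates of the sum of S in
   a maximal cone containing S - j are nonnegative integers, vanish on S - j by
   primitivity, and are otherwise 0 or 1 with at most one 1.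
   (ii) => (i): a form with values in [0, 1] on the rays of a maximal cone is at most 1
   on every ray, by descent along the primitive relations, and this yields the strict
   inequalities making each X(tau) Fano. *)

Section Lattice.
Variables (R : realType) (n : nat).

Definition dotr (u x : 'rV[R]_n) : R := \sum_k u 0 k * x 0 k.

Fact dotr_is_linear u : linear_for *%R (dotr u).
Proof.
move=> a x y; rewrite /dotr mulr_sumr -big_split; apply: eq_bigr => k _.
by rewrite !mxE mulrDr mulrCA.
Qed.

HB.instance Definition _ u :=
  GRing.isLinear.Build R 'rV[R]_n R *%R (dotr u) (dotr_is_linear u).

Lemma dotrC u x : dotr u x = dotr x u.
Proof. by apply: eq_bigr => k _; rewrite mulrC. Qed.

Lemma pairingE u v : pairing u v = dotr u (rvR R v).
Proof. by apply: eq_bigr => k _; rewrite mxE. Qed.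

HB.instance Definition _ := GRing.Additive.copy (@rvR R n) (map_mx (intmul (1 : R))).

Lemma rvR_inj : injective (@rvR R n).
Proof.
by move=> u v /matrixP E; apply/matrixP => i j; have := E i j; rewrite !mxE => /intr_inj.
Qed.

End Lattice.

Lemma sumr_delta (R : pzRingType) (I : finType) (A : {set I}) (F : I -> R) a :
  a \in A -> \sum_(i in A) F i * (i == a)%:R = F a.
Proof.
move=> aA; rewrite (big_setD1 a) //= eqxx mulr1 big1 ?addr0 // => i.
by rewrite !inE => /andP[/negbTE -> _]; rewrite mulr0.
Qed.

Lemma setDDK (T : finType) (A B : {set T}) : B \subset A -> A :\: (A :\: B) = B.
Proof. by move=> BA; rewrite setDDr setDv set0U; apply/setIidPr. Qed.

Lemma potential_ind (R : numDomainType) (I : finType) (h : I -> R) (P : I -> Prop) :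
  (forall k, (forall j, h k < h j -> P j) -> P k) -> forall k, P k.
Proof.
pose above k := [set j | h k < h j].
have above_lt j k : h k < h j -> (#|above j| < #|above k|)%N.
  move=> hkj; apply: proper_card; apply/properP; split; last by exists j; rewrite !inE ?ltxx.
  by apply/subsetP => i; rewrite !inE; apply: lt_trans.
move=> step k; elim: {k}_.+1 {-2}k (ltnSn #|above k|) => // N IH k lt_kN.
by apply: step => j /above_lt lt_jk; apply: IH; lia.
Qed.

Lemma natr_lt1 (R : archiNumDomainType) (x : R) : x \is a Num.nat -> (x < 1) = (x == 0).
Proof. by move=> /natrP[k ->]; rewrite -[1]/(1%:R) ltr_nat pnatr_eq0 ltnS leqn0. Qed.

Lemma natr_lt2 (R : archiNumDomainType) (x : R) :
  x \is a Num.nat -> (x < 2) = (x == 0) || (x == 1).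
Proof. by move=> /natrP[k ->]; rewrite ltr_nat pnatr_eq0 pnatr_eq1; case: k => [|[]]. Qed.

Lemma int_num_lezD1 (R : realType) (x y : R) :
  x \is a Num.int -> y \is a Num.int -> (x + 1 <= y) = (x < y).
Proof. by move=> /intrP[a ->] /intrP[b ->]; rewrite -[1]/(1%:~R) -intrD ler_int ltr_int lezD1. Qed.

Lemma unbounded_ge0 (R : realType) (a b : R) :
  (forall M : nat, exists2 N : nat, (M <= N)%N & 0 <= a + N%:R * b) -> 0 <= b.
Proof.
move=> unb; rewrite leNgt; apply/negP => b_lt0.
have [N MN] := unb (Num.bound (`|a| / - b)).
have : `|a| / - b < N%:R.
  apply: lt_le_trans (archi_boundP _) _; last by rewrite ler_nat.
  by rewrite divr_ge0 // oppr_ge0 ltW.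
rewrite ltr_pdivrMr ?oppr_gt0 // mulrN => lt_aN.
by have := ler_norm a; lra.
Qed.

Section SmoothFan.
Variables (R : realType) (n m : nat) (ray : 'I_m -> 'rV[int]_n)
  (C : {set {set 'I_m}}).

Local Notation rho i := (rvR R (ray i)).
Implicit Types (A B S s sigma tau : {set 'I_m}) (c d : 'I_m -> R) (u x : 'rV[R]_n).

Definition comb (A : {set 'I_m}) (c : 'I_m -> R) : 'rV[R]_n :=
  \sum_(i in A) c i *: rho i.

Lemma dotr_comb u A c : dotr u (comb A c) = \sum_(i in A) c i * pairing u (ray i).
Proof. by rewrite linear_sum; apply: eq_bigr => i _; rewrite linearZ pairingE. Qed.

Lemma eq_comb A c d : {in A, c =1 d} -> comb A c = comb A d.
Proof. by move=> cd; apply: eq_bigr => i /cd ->. Qed.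

Lemma combB A c d : comb A (fun i => c i - d i) = comb A c - comb A d.
Proof. by rewrite -sumrB; apply: eq_bigr => i _; rewrite scalerBl. Qed.

Lemma combD A c d : comb A (fun i => c i + d i) = comb A c + comb A d.
Proof. by rewrite -big_split; apply: eq_bigr => i _; rewrite scalerDl. Qed.

Lemma combZ A t c : comb A (fun i => t * c i) = t *: comb A c.
Proof. by rewrite scaler_sumr; apply: eq_bigr => i _; rewrite scalerA. Qed.

Lemma comb_const A t : comb A (fun=> t) = t *: \sum_(i in A) rho i.
Proof. by rewrite scaler_sumr. Qed.

Lemma comb_delta A a : a \in A -> comb A (fun i => (i == a)%:R) = rho a.
Proof.
move=> aA; rewrite /comb (bigD1 a) //= eqxx scale1r big1 ?addr0 // => i /andP[_ ia].
by rewrite (negbTE ia) scale0r.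
Qed.

Lemma comb_setW A B c : A \subset B ->
  comb A c = comb B (fun i => if i \in A then c i else 0).
Proof.
move=> AB; rewrite /comb [RHS](big_setID A) /= (setIidPr AB) [X in _ + X]big1 ?addr0.
  by apply: eq_bigr => i ->.
by move=> i; rewrite inE => /andP[/negbTE -> _]; rewrite scale0r.
Qed.

Hypothesis Hfan : smooth_fan R ray C.
Hypothesis Hcomplete : complete_fan R ray C.

Let ray_inj : injective ray. Proof. by case: Hfan. Qed.
Let singleton_cone i : [set i] \in C. Proof. by case: Hfan. Qed.
Let face_cone A B : A \in C -> B \subset A -> B \in C.
Proof. by case: Hfan => _ _ sub _ _; apply: sub. Qed.
Let cone_basis A : A \in C -> part_of_basis ray A.
Proof. by case: Hfan => _ _ _ basis _; apply: basis. Qed.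
Let in_cone_meet A B x : A \in C -> B \in C ->
  in_cone ray A x -> in_cone ray B x -> in_cone ray (A :&: B) x.
Proof. by case: Hfan => _ _ _ _; apply. Qed.

Lemma dotr_int (w v : 'rV[int]_n) : dotr (rvR R w) (rvR R v) \is a Num.int.
Proof. by apply: rpred_sum => k _; rewrite !mxE rpredM ?intr_int. Qed.

Lemma dual_family A : A \in C -> exists delta : 'I_m -> 'rV[int]_n,
  forall a i, a \in A -> i \in A -> pairing (rvR R (delta a)) (ray i) = (i == a)%:R.
Proof.
move=> /cone_basis[B [detB rowB]]; have uB : B \in unitmx by rewrite unitmxE.
pose idx i := [pick j | row j B == ray i].
have idxP i : i \in A -> exists2 j, idx i = Some j & row j B = ray i.
  rewrite /idx => /rowB[j0 Ej0]; case: pickP => [j /eqP | /(_ j0)]; last by rewrite Ej0 eqxx.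
  by exists j.
exists (fun a => if idx a is Some j then (col j (invmx B))^T else 0) => a i aA iA.
have [ja Ea rowa] := idxP a aA; have [ji Ei rowi] := idxP i iA; rewrite Ea.
have -> : pairing (rvR R (col ja (invmx B))^T) (ray i) = ((B *m invmx B) ji ja)%:~R.
  rewrite /pairing mxE rmorph_sum; apply: eq_bigr => k _.
  by rewrite -rowi !mxE rmorphM mulrC.
rewrite mulmxV // mxE rmorph_nat; congr (nat_of_bool _)%:R.
apply/eqP/eqP => [eqj | eqi]; first by apply: ray_inj; rewrite -rowi -rowa eqj.
by move: Ei; rewrite eqi Ea => -[].
Qed.

Lemma comb_coord A : A \in C -> exists delta : 'I_m -> 'rV[int]_n,
  forall c a, a \in A -> dotr (rvR R (delta a)) (comb A c) = c a.
Proof.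
move=> /dual_family[delta Hdelta]; exists delta => c a aA.
rewrite dotr_comb -(sumr_delta c aA); apply: eq_bigr => i iA.
by rewrite Hdelta.
Qed.

Lemma comb_inj A c d : A \in C -> comb A c = comb A d -> {in A, c =1 d}.
Proof. by move=> /comb_coord[delta Hdelta] E a aA; rewrite -!(Hdelta _ a aA) E. Qed.

Lemma comb_int A (v : 'rV[int]_n) c : A \in C -> rvR R v = comb A c ->
  {in A, forall a, c a \is a Num.int}.
Proof. by move=> /comb_coord[delta Hdelta] E a aA; rewrite -(Hdelta c a aA) -E dotr_int. Qed.

Lemma form_on_cone A (f : 'I_m -> R) : A \in C ->
  exists u, {in A, forall i, pairing u (ray i) = f i}.
Proof.
move=> /dual_family[delta Hdelta]; exists (\sum_(a in A) f a *: rvR R (delta a)) => i iA.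
rewrite pairingE dotrC linear_sum -(sumr_delta f iA); apply: eq_bigr => a aA.
by rewrite linearZ /= dotrC -pairingE Hdelta // eq_sym.
Qed.

Lemma in_cone_comb A c : {in A, forall i, 0 <= c i} -> in_cone ray A (comb A c).
Proof.
move=> c_ge0; exists (fun i => if i \in A then c i else 0); split=> [i|].
  by case: ifP => // /c_ge0.
by rewrite -/(comb _ _) -comb_setW.
Qed.

Lemma in_cone_sub A B x : A \subset B -> in_cone ray A x -> in_cone ray B x.
Proof.
move=> AB [c [c_ge0 ->]]; rewrite -/(comb A c) (comb_setW c AB).
by apply: in_cone_comb => i _; case: ifP.
Qed.

Lemma in_cone_sum_sub tau A : tau \in C -> A \in C ->
  in_cone ray A (\sum_(i in tau) rho i) -> tau \subset A.
Proof.
move=> Ctau CA wA.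
have wtau : in_cone ray tau (\sum_(i in tau) rho i).
  by rewrite -[X in in_cone _ _ X]scale1r -comb_const; apply: in_cone_comb => i _.
have [e [_ Ee]] := in_cone_meet CA Ctau wA wtau.
have : comb tau (fun=> 1) = comb tau (fun i => if i \in A :&: tau then e i else 0).
  by rewrite comb_const scale1r Ee -/(comb _ e) -comb_setW ?subsetIr.
move=> /comb_inj-/(_ Ctau) E; apply/subsetP => a atau.
by have := E a atau; rewrite inE atau andbT; case: (a \in A) => // /eqP; rewrite oner_eq0.
Qed.

Lemma set0_in_fan : set0 \in C.
Proof. by have [A CA _] := Hcomplete 0; apply: face_cone CA (sub0set A). Qed.

Lemma maximal_cone_ext A : A \in C -> exists2 sigma, maximal_cone C sigma & A \subset sigma.
Proof.
move=> CA; pose P := [pred s | (s \in C) && (A \subset s)].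
have PA : P A by rewrite inE CA subxx.
have [s /andP[Cs As] smax] := @arg_maxnP _ A P (fun s => #|s|) PA.
exists s => //; split=> // B CB sB; apply/esym/eqP; rewrite eqEcard sB /=.
by apply: smax; rewrite inE CB (subset_trans As sB).
Qed.

(* Two points of the line x + N w in the cone of A put w in the span of A, and its
   coordinates are nonnegative because the line stays in the cone for arbitrarily
   large N. *)
Lemma shift_in_cone_sub tau A x : tau \in C -> A \in C ->
  (forall M : nat, exists2 N : nat, (M <= N)%N &
     in_cone ray A (x + N%:R *: \sum_(i in tau) rho i)) ->
  tau \subset A.
Proof.
move=> Ctau CA unb; apply: in_cone_sum_sub => //.
set w := \sum_(i in tau) rho i in unb *.
have [N1 _ [c1 [_ E1]]] := unb 0%N; have [N2 N12 [c2 [_ E2]]] := unb N1.+1.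
have k_gt0 : 0 < N2%:R - N1%:R :> R by rewrite subr_gt0 ltr_nat.
pose beta i := (c2 i - c1 i) / (N2%:R - N1%:R).
have Ew : w = comb A beta.
  apply: (@scalerI _ _ (N2%:R - N1%:R)); first by rewrite gt_eqF.
  rewrite -combZ (eq_comb (d := fun i => c2 i - c1 i)) => [|i _]; last first.
    by rewrite mulrC divfK // gt_eqF.
  by rewrite combB -[comb A c1]E1 -[comb A c2]E2 opprD addrACA subrr add0r scalerBl.
have Ex : x = comb A (fun i => c1 i - N1%:R * beta i).
  by rewrite combB combZ -Ew -[comb A c1]E1 addrK.
have beta_ge0 a : a \in A -> 0 <= beta a.
  move=> aA; apply: (@unbounded_ge0 _ (c1 a - N1%:R * beta a)) => M.
  have [N MN [c [c_ge0 E]]] := unb M; exists N => //.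
  have Ec : comb A (fun i => c1 i - N1%:R * beta i + N%:R * beta i) = comb A c.
    by rewrite combD combZ -Ex -Ew; exact: E.
  by rewrite (comb_inj CA Ec aA).
by rewrite Ew; apply: in_cone_comb.
Qed.

Lemma shift_in_cone_eventually tau A x : tau \in C -> exists M : nat,
  forall N : nat, (M <= N)%N -> A \in C ->
    in_cone ray A (x + N%:R *: \sum_(i in tau) rho i) -> tau \subset A.
Proof.
move=> Ctau; case: (boolP (A \in C)) => [CA|]; last by exists 0%N.
have [unb | bnd] := classic (forall M : nat, exists2 N : nat, (M <= N)%N &
  in_cone ray A (x + N%:R *: \sum_(i in tau) rho i)).
  by exists 0%N => *; apply: shift_in_cone_sub unb.
have [M notM] := not_all_ex_not _ _ bnd; exists M => N MN _ inA.
by case: notM; exists N.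
Qed.

(* Completeness of Star(tau): for N large, x + N * (sum of the rays of tau) lies in a
   cone, which then contains tau. *)
Lemma star_complete tau x : tau \in C -> exists sigma,
  [/\ maximal_cone C sigma, tau \subset sigma &
      exists2 c, x = comb sigma c & forall i, i \notin tau -> 0 <= c i].
Proof.
move=> Ctau.
have [M HM] := fin_all_exists (fun A => shift_in_cone_eventually A x Ctau).
set N := \max_A M A.
have [A CA inA] := Hcomplete (x + N%:R *: \sum_(i in tau) rho i).
have tauA := HM A N (leq_bigmax A) CA inA.
have [sigma smax Asigma] := maximal_cone_ext CA.
have tausigma := subset_trans tauA Asigma.
have [c [c_ge0 Ec]] := in_cone_sub Asigma inA.
exists sigma; split=> //; exists (fun i => c i - (if i \in tau then N%:R else 0)).
  by rewrite combB -(comb_setW (fun=> N%:R) tausigma) comb_const -[comb sigma c]Ec addrK.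
by move=> i /negbTE ->; rewrite subr0.
Qed.

Lemma maximal_cone_span sigma x : maximal_cone C sigma -> exists c, x = comb sigma c.
Proof.
move=> [Csigma smax]; have [s [[Cs _] sigmas [c Ex _]]] := star_complete x Csigma.
by exists c; rewrite Ex (smax _ Cs sigmas).
Qed.

Lemma pairing_sum u S : pairing u (\sum_(i in S) ray i) = \sum_(i in S) pairing u (ray i).
Proof. by rewrite pairingE raddf_sum linear_sum; apply: eq_bigr => i _; rewrite pairingE. Qed.

Lemma form_int_on_rays sigma u : maximal_cone C sigma ->
  {in sigma, forall a, pairing u (ray a) \is a Num.int} ->
  forall k, pairing u (ray k) \is a Num.int.
Proof.
move=> smax u_int k; have [c Ek] := maximal_cone_span (rho k) smax.
rewrite pairingE Ek dotr_comb; apply: rpred_sum => a sa.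
by rewrite rpredM ?u_int // (comb_int smax.1 Ek).
Qed.

Lemma dotr_comb_vanish tau sigma u c : {in tau, forall i, pairing u (ray i) = 0} ->
  dotr u (comb sigma c) = \sum_(i in sigma :\: tau) c i * pairing u (ray i).
Proof.
move=> u0; rewrite dotr_comb (big_setID tau) /= big1 ?add0r // => i /setIP[_ /u0 ->].
exact: mulr0.
Qed.

Definition fano_witness tau sigma u : Prop :=
  [/\ forall i, i \in tau -> pairing u (ray i) = 0,
      forall i, i \in sigma -> i \notin tau -> pairing u (ray i) = 1 &
      forall j, j \notin sigma -> tau :|: [set j] \in C -> pairing u (ray j) < 1].

Lemma fano_witness_comb tau sigma u c : fano_witness tau sigma u ->
  dotr u (comb sigma c) = \sum_(i in sigma :\: tau) c i.
Proof.
case=> u0 u1 _; rewrite (dotr_comb_vanish sigma c u0); apply: eq_bigr => i /setDP[si ti].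
by rewrite u1 ?mulr1.
Qed.

Lemma fano_witness_le1_star tau sigma u j : fano_witness tau sigma u ->
  tau :|: [set j] \in C -> pairing u (ray j) <= 1.
Proof.
case=> u0 u1 u2 Cj; have [sj | nsj] := boolP (j \in sigma); last exact/ltW/u2.
by have [/u0 | /(u1 _ sj)] := boolP (j \in tau) => ->; rewrite ?ler01.
Qed.

Section FanoStars.
Hypothesis fanoC : forall tau, tau \in C -> fano_orbit_closure R ray C tau.

(* Condition (ii) for the primitive pair {j, z} of the Fano fan Star(t0), modulo the
   span of t0. *)
Lemma fano_star_primitive_pair t0 j z : t0 \in C ->
  t0 :|: [set j] \in C -> t0 :|: [set z] \in C -> t0 :|: [set j; z] \notin C ->
  (forall u, {in t0, forall i, pairing u (ray i) = 0} ->
     pairing u (ray j) + pairing u (ray z) = 0) \/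
  exists2 a, t0 :|: [set a] \in C & forall u, {in t0, forall i, pairing u (ray i) = 0} ->
     pairing u (ray j) + pairing u (ray z) = pairing u (ray a).
Proof.
move=> Ct0 Cj Cz nCjz.
have [sigma [smax t0s [c Ec c_ge0]]] := star_complete (rho j + rho z) Ct0.
have pair_sum u : {in t0, forall i, pairing u (ray i) = 0} ->
    pairing u (ray j) + pairing u (ray z) = \sum_(i in sigma :\: t0) c i * pairing u (ray i).
  by move=> u0; rewrite !pairingE -linearD /= Ec (dotr_comb_vanish sigma c u0).
have c_nat i : i \in sigma :\: t0 -> c i \is a Num.nat.
  have Ec' : rvR R (ray j + ray z) = comb sigma c by rewrite raddfD.
  by move=> /setDP[si ti]; rewrite natrEint c_ge0 // andbT (comb_int smax.1 Ec').
have sum_lt2 : \sum_(i in sigma :\: t0) c i < 2.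
  have [u Fu] := fanoC Ct0 smax t0s.
  rewrite -(fano_witness_comb c Fu) -Ec linearD /= -!pairingE.
  have := fano_witness_le1_star Fu Cj; have := fano_witness_le1_star Fu Cz.
  have : (j \notin sigma) || (z \notin sigma).
    rewrite -negb_and; apply: contra nCjz => /andP[sj sz]; apply: face_cone smax.1 _.
    by rewrite subUset t0s; apply/subsetP => i; rewrite !inE => /orP[] /eqP ->.
  by case: Fu => _ _ u2; case/orP => [/u2/(_ Cj) | /u2/(_ Cz)]; lra.
move: sum_lt2; rewrite natr_lt2 ?rpred_sum // => /orP[] /eqP sum_c.
  left=> u u0; rewrite pair_sum // big1 // => i ti.
  by rewrite (psumr_eq0P _ sum_c) ?mul0r // => k /c_nat /natr_ge0.
have [a [ta ca1 c0]] := natr_sum_eq1 c_nat sum_c.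
right; exists a.
  by apply: face_cone smax.1 _; rewrite subUset t0s sub1set; case/setDP: ta.
move=> u u0; rewrite pair_sum // (bigD1 a) //= ca1 mul1r big1 ?addr0 // => i /andP[ti ia].
by rewrite c0 ?mul0r.
Qed.

(* Descent along the form g dual to z: if tau + j is not a cone, the relation for
   the pair {j, z} gives a ray a with u(a) = u(j) and g(a) = g(j) + 1. *)
Lemma fano_witness_le1_facet tau z sigma u : tau \in C -> z \in tau ->
  fano_witness tau sigma u -> forall j, (tau :\ z) :|: [set j] \in C -> pairing u (ray j) <= 1.
Proof.
move=> Ctau ztau Fu; have [u0 _ _] := Fu; set t0 := tau :\ z.
have Ct0 : t0 \in C := face_cone Ctau (subD1set tau z).
have tauE : t0 :|: [set z] = tau by rewrite setUC setD1K.
have u_t0 : {in t0, forall i, pairing u (ray i) = 0}.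
  by move=> i /setD1P[_ /u0].
have [g g_tau] := form_on_cone (fun i => (i == z)%:R) Ctau.
have g_t0 : {in t0, forall i, pairing g (ray i) = 0}.
  by move=> i /setD1P[iz ti]; rewrite g_tau // (negbTE iz).
move=> j; elim/(@potential_ind _ _ (fun j => pairing g (ray j))): j => j IH Cj.
have [Ctauj | nCtauj] := boolP (tau :|: [set j] \in C).
  exact: fano_witness_le1_star Fu Ctauj.
have Cz : t0 :|: [set z] \in C by rewrite tauE.
have nCjz : t0 :|: [set j; z] \notin C by rewrite setUCA tauE setUC.
have [rel0 | [a Ca rela]] := fano_star_primitive_pair Ct0 Cj Cz nCjz.
  by have := rel0 u u_t0; rewrite (u0 z ztau) addr0 => ->; rewrite ler01.
have := rela u u_t0; rewrite (u0 z ztau) addr0 => ->; apply: IH Ca.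
by have := rela g g_t0; rewrite (g_tau z ztau) eqxx => <-; rewrite ltrDl ltr01.
Qed.

Lemma fano_witness_le1 tau sigma u : tau \in C -> fano_witness tau sigma u ->
  forall k, pairing u (ray k) <= 1.
Proof.
move Ntau : #|tau| => N; elim: N tau Ntau sigma u => [|N IH] tau Ntau sigma u Ctau Fu k.
  move: Fu; rewrite (cards0_eq Ntau) => Fu.
  by apply: fano_witness_le1_star Fu _; rewrite set0U.
have [z ztau] : exists z, z \in tau by apply/set0Pn; rewrite -card_gt0 Ntau.
set t0 := tau :\ z.
have Ct0 : t0 \in C := face_cone Ctau (subD1set tau z).
have Nt0 : #|t0| = N by move: (cardsD1 z tau); rewrite ztau Ntau add1n => -[].
have [s0 [s0max t0s0 [c Ek c_ge0]]] := star_complete (rho k) Ct0.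
have [u0 Fu0] := fanoC Ct0 s0max t0s0.
have := IH t0 Nt0 s0 u0 Ct0 Fu0 k.
have u_t0 : {in t0, forall i, pairing u (ray i) = 0}.
  by case: Fu => u_tau _ _ i /setD1P[_ /u_tau].
rewrite !pairingE Ek (fano_witness_comb c Fu0) (dotr_comb_vanish s0 c u_t0).
move=> sum_le1; apply: le_trans sum_le1; apply: ler_sum => i /setDP[s0i t0i].
rewrite -[X in _ <= X]mulr1 ler_wpM2l ?c_ge0 //.
apply: (fano_witness_le1_facet Ctau ztau Fu).
by apply: face_cone s0max.1 _; rewrite subUset t0s0 sub1set.
Qed.

Lemma fano_coord_sum_le1 mu k b tau : maximal_cone C mu -> rho k = comb mu b ->
  tau \subset mu -> \sum_(i in mu :\: tau) b i <= 1.
Proof.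
move=> mumax Ek taumu; have Ctau := face_cone mumax.1 taumu.
have [u Fu] := fanoC Ctau mumax taumu.
by rewrite -(fano_witness_comb b Fu) -Ek -pairingE (fano_witness_le1 Ctau Fu).
Qed.

(* Write rho_k in a maximal cone s containing mu - i but not i: the Fano form of
   X(mu - i) on s is an integer < 1 on rho_i, nonzero since b_i <> 0, hence <= -1,
   while b_i times it is the value on rho_k, which is <= 1. *)
Lemma fano_coord_geN1 mu k b i : maximal_cone C mu -> rho k = comb mu b ->
  i \in mu -> -1 <= b i.
Proof.
move=> mumax Ek imu; have [b_ge0 | b_lt0] := lerP 0 (b i); first lra.
set tau := mu :\ i; have taumu : tau \subset mu := subD1set mu i.
have Ctau := face_cone mumax.1 taumu.
have itau : i \notin tau by rewrite !inE eqxx.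
have [s [smax taus [c Ek' c_ge0]]] := star_complete (rho k) Ctau.
have [si | nsi] := boolP (i \in s).
  have smu : s = mu by apply: mumax.2 smax.1 _; rewrite -(setD1K imu) subUset sub1set si.
  have bc : comb mu b = comb mu c by rewrite -Ek -smu.
  by have := c_ge0 i itau; rewrite -(comb_inj mumax.1 bc imu); lra.
have [u Fu] := fanoC Ctau smax taus; have [u0 u1 u2] := Fu.
have uk_le1 := fano_witness_le1 Ctau Fu k.
have uk : pairing u (ray k) = b i * pairing u (ray i).
  by rewrite pairingE Ek (dotr_comb_vanish mu b u0) setDDK ?sub1set // big_set1.
have ui_lt1 : pairing u (ray i) < 1 by apply: (u2 _ nsi); rewrite setUC setD1K //; case: mumax.
have ui_int : pairing u (ray i) \is a Num.int.
  apply: (form_int_on_rays smax) => a sa.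
  by have [/u0 | /(u1 _ sa)] := boolP (a \in tau) => ->; rewrite ?rpred0 ?rpred1.
have ui_neq0 : pairing u (ray i) != 0.
  apply: contraTneq b_lt0 => ui0.
  have c0 : {in s :\: tau, forall a, c a = 0}.
    apply: psumr_eq0P => [a /setDP[_ /c_ge0] // |].
    by rewrite -(fano_witness_comb c Fu) -Ek' -pairingE uk ui0 mulr0.
  have : comb mu b = comb mu (fun a => if a \in tau then c a else 0).
    rewrite -comb_setW // -Ek Ek' [RHS](comb_setW c taus).
    apply: eq_comb => a sa; case: ifP => // /negbT ta.
    by rewrite c0 //; apply/setDP.
  by move=> /comb_inj-/(_ mumax.1 i imu); rewrite (negbTE itau) => ->; rewrite ltxx.
have ui_le0 : pairing u (ray i) <= 0.
  by rewrite -(lerD2r 1) add0r int_num_lezD1 ?rpred1.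
have : pairing u (ray i) + 1 <= 0 by rewrite int_num_lezD1 ?rpred0 // lt_neqAle ui_neq0.
by rewrite uk in uk_le1; nra.
Qed.

Lemma fano_cond_iii : cond_iii R ray C.
Proof.
move=> mu mumax k b Ek; split=> [i imu | ].
  rewrite (fano_coord_geN1 mumax Ek imu) /=.
  by have := fano_coord_sum_le1 mumax Ek (subD1set mu i); rewrite setDDK ?sub1set // big_set1.
rewrite leqNgt; apply/negP => /card_gt1P[i [j [/setIdP[imu /eqP bi] /setIdP[jmu /eqP bj] ij]]].
have ijmu : [set i; j] \subset mu by apply/subsetP => a; rewrite !inE => /orP[] /eqP ->.
have := fano_coord_sum_le1 mumax Ek (subsetDl mu [set i; j]).
by rewrite setDDK // big_setU1 ?inE // big_set1 bi bj /=; lra.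
Qed.

End FanoStars.

Lemma primitive_subset X : X \notin C -> exists2 S, primitive_set C S & S \subset X.
Proof.
move=> nCX; pose P := [pred Y : {set 'I_m} | (Y \subset X) && (Y \notin C)].
have PX : P X by rewrite inE subxx nCX.
have [S /andP[SX nCS] Smin] := @arg_minnP _ X P (fun Y => #|Y|) PX.
exists S => //; split=> // T TS; apply/negPn/negP => nCT.
have := Smin T; rewrite inE nCT (subset_trans (proper_sub TS) SX) leqNgt => /(_ isT).
by rewrite proper_card.
Qed.

Lemma primitive_subset_link sigma k : maximal_cone C sigma -> k \notin sigma ->
  exists S, [/\ primitive_set C S, k \in S, S :\ k \subset sigma & S :\ k != set0].
Proof.
move=> [Csigma smax] nks.
have nCsk : sigma :|: [set k] \notin C.
  apply: contra nks => Csk; rewrite -(smax _ Csk (subsetUl _ _)).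
  by rewrite inE set11 orbT.
have [S [nCS primS] SX] := primitive_subset nCsk.
have kS : k \in S.
  apply: contraNT nCS => nkS; apply: face_cone Csigma _; apply/subsetP => a aS.
  have := subsetP SX a aS; rewrite !inE => /orP[// | /eqP ak].
  by rewrite -ak aS in nkS.
exists S; split=> //.
  by apply/subsetP => a /setD1P[ak /(subsetP SX)]; rewrite !inE (negbTE ak) orbF.
apply: contra nCS => /eqP Sk0.
by rewrite -(setD1K kS) Sk0 setU0 singleton_cone.
Qed.

Section PrimitiveRelations.
Hypothesis Hii : cond_ii ray C.

(* Descent along the form equal to 1 on sigma, through the primitive relation
   containing k. *)
Lemma form_le1 sigma u : maximal_cone C sigma ->
  {in sigma, forall a, 0 <= pairing u (ray a) <= 1} -> forall k, pairing u (ray k) <= 1.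
Proof.
move=> smax u01; have [h h1] := form_on_cone (fun=> 1) smax.1.
elim/(@potential_ind _ _ (fun k => pairing h (ray k))) => k IH.
have [sk | nsk] := boolP (k \in sigma); first by case/andP: (u01 k sk).
have [S [primS kS Sks Sk0]] := primitive_subset_link smax nsk.
have u_rest : 0 <= \sum_(a in S :\ k) pairing u (ray a).
  by apply: sumr_ge0 => a /(subsetP Sks) /u01 /andP[].
have h_rest : 1 <= \sum_(a in S :\ k) pairing h (ray a).
  have [a0 a0S] := set0Pn _ Sk0.
  rewrite (big_setD1 a0) //= h1 ?(subsetP Sks) // lerDl sumr_ge0 // => a /setD1P[_ aS].
  by rewrite h1 ?ler01 // (subsetP Sks).
have := pairing_sum u S; have := pairing_sum h S.
case: (Hii primS) => [-> | [j ->]]; rewrite !(big_setD1 k kS) /=.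
  by rewrite !pairingE raddf0 !linear0; lra.
move=> hj uj; have : pairing u (ray j) <= 1 by apply: IH; lra.
by lra.
Qed.

Lemma cond_ii_fano tau : tau \in C -> fano_orbit_closure R ray C tau.
Proof.
move=> Ctau sigma smax taus.
have [u u_val] := form_on_cone (fun a => if a \in tau then 0 else 1) smax.1.
have u0 i : i \in tau -> pairing u (ray i) = 0.
  by move=> ti; rewrite u_val ?ti // (subsetP taus).
have u1 i : i \in sigma -> i \notin tau -> pairing u (ray i) = 1.
  by move=> si /negbTE ti; rewrite u_val ?ti.
have u01 : {in sigma, forall a, 0 <= pairing u (ray a) <= 1}.
  by move=> a sa; rewrite u_val //; case: ifP; rewrite ?lexx ?ler01.
exists u; split=> // j nsj Cj.
have [S [primS jS Sjs _]] := primitive_subset_link smax nsj.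
have /subsetPn[a0 a0S ta0] : ~~ (S :\ j \subset tau).
  apply: contra primS.1 => Sjtau; apply: face_cone Cj _.
  by rewrite -(setD1K jS) setUC setSU.
have u_rest : 1 <= \sum_(a in S :\ j) pairing u (ray a).
  rewrite (big_setD1 a0) //= u1 ?(subsetP Sjs) // lerDl sumr_ge0 // => a /setD1P[_ aS].
  by case/andP: (u01 a (subsetP Sjs a aS)).
have := pairing_sum u S.
case: (Hii primS) => [-> | [j' ->]]; rewrite (big_setD1 j jS) /=.
  by rewrite pairingE raddf0 linear0; lra.
by have := form_le1 smax u01 j'; lra.
Qed.

Lemma cond_ii_i : cond_i R ray C.
Proof. by split; [apply: cond_ii_fano; exact: set0_in_fan | exact: cond_ii_fano]. Qed.

End PrimitiveRelations.

Lemma primitive_sum_coord_lt1 S s d j a : primitive_set C S -> s \in C ->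
  j \in S -> j \notin s -> a \in S :\ j -> a \in s ->
  rvR R (\sum_(i in S) ray i) = comb s d -> {in s, forall i, 0 <= d i} -> d a < 1.
Proof.
move=> [_ primS] Cs jS njs /setD1P[aj aS] sa ES d_ge0; rewrite ltNge; apply/negP => da1.
have CSa : S :\ a \in C by apply/primS/properD1.
have Ew : \sum_(i in S :\ a) rho i = comb s (fun i => d i - (i == a)%:R).
  by rewrite combB comb_delta // -ES raddf_sum (big_setD1 a aS) /= addrC addrK.
have /(in_cone_sum_sub CSa Cs)/subsetP/(_ j) : in_cone ray s (\sum_(i in S :\ a) rho i).
  rewrite Ew; apply: in_cone_comb => i si; have := d_ge0 i si.
  by case: eqP => [-> | _] /=; lra.
by rewrite !inE eq_sym aj jS (negbTE njs) => /(_ isT).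
Qed.

Lemma cond_iii_ii : cond_iii R ray C -> cond_ii ray C.
Proof.
move=> Hiii S primS.
have [j jS] : exists j, j \in S.
  by apply/set0Pn; apply: contraNneq primS.1 => ->; exact: set0_in_fan.
set T := S :\ j; have CT : T \in C by apply/primS.2/properD1.
have [s [smax Ts [b Ej b_ge0]]] := star_complete (rho j) CT.
have njs : j \notin s.
  apply: contra primS.1 => js; apply: face_cone smax.1 _.
  by rewrite -(setD1K jS) subUset sub1set js.
have [b_bnd b_one] := Hiii s smax j b Ej.
pose d i := b i + (if i \in T then 1 else 0).
have ES : rvR R (\sum_(i in S) ray i) = comb s d.
  rewrite raddf_sum (big_setD1 j jS) /= combD -Ej; congr (_ + _).
  by rewrite -[LHS]scale1r -comb_const (comb_setW _ Ts).
have d_nat i : i \in s -> d i \is a Num.nat.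
  move=> si; rewrite natrEint (comb_int smax.1 ES si) /= /d.
  by have := b_bnd i si; have := b_ge0 i; case: ifP => _ /=; lra.
have dT i : i \in T -> d i = 0.
  move=> iT; have si := subsetP Ts i iT; apply/eqP; rewrite -natr_lt1 ?d_nat //.
  apply: (primitive_sum_coord_lt1 primS smax.1 jS njs iT si ES) => k sk.
  exact: natr_ge0 (d_nat k sk).
have d01 i : i \in s -> (d i == 0) || (d i == 1).
  move=> si; rewrite -natr_lt2 ?d_nat //; have [iT | niT] := boolP (i \in T).
    by rewrite dT // ltr0n.
  by have := b_bnd i si; rewrite /d (negbTE niT); lra.
pose P := [set i in s | d i == 1].
have cardP : (#|P| <= 1)%N.
  apply: leq_trans b_one; apply: subset_leq_card; apply/subsetP => i.
  rewrite !inE => /andP[si /eqP di1]; rewrite si /=.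
  have [iT | niT] := boolP (i \in T); first by move: di1; rewrite dT // => /eqP; rewrite eq_sym oner_eq0.
  by move: di1; rewrite /d (negbTE niT) addr0 => ->.
have ESP : rvR R (\sum_(i in S) ray i) = comb s (fun i => (i \in P)%:R).
  rewrite ES; apply: eq_comb => i si; rewrite inE si /=.
  by case/orP: (d01 i si) => /eqP ->; rewrite ?eqxx // eq_sym oner_eq0.
have [/cards0_eq P0 | /eqP/cards1P[a Pa]] : #|P| = 0%N \/ #|P| = 1%N by lia.
  left; apply: (@rvR_inj R); rewrite ESP P0 raddf0; apply: big1 => i _.
  by rewrite in_set0 scale0r.
have : a \in P by rewrite Pa set11.
rewrite inE => /andP[sa _]; right; exists a; apply: (@rvR_inj R).
by rewrite ESP -(comb_delta sa); apply: eq_comb => i _; rewrite Pa in_set1.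
Qed.

End SmoothFan.

Theorem theorem3p1 (R : realType) (n m : nat) (ray : 'I_m -> 'rV[int]_n)
  (C : {set {set 'I_m}})
  (Hfan : smooth_fan R ray C) (Hcomplete : complete_fan R ray C) :
  (cond_i R ray C <-> cond_ii ray C) /\ (cond_ii ray C <-> cond_iii R ray C).
Proof.
have i_iii (Hi : cond_i R ray C) := fano_cond_iii Hfan Hcomplete Hi.2.
have iii_ii := cond_iii_ii Hfan Hcomplete.
have ii_i := cond_ii_i Hfan Hcomplete.
split; split.
- by move=> /i_iii/iii_ii.
- exact: ii_i.
- by move=> /ii_i/i_iii.
- exact: iii_ii.
Qed.
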